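(* Fix a tomographically complete measurement $\mu^\diamond$ on $\mathcal X=\mathbb C^n$ with finite outcome set $\mathcal Y$. For every quantum property $\Gamma:\mathrm{Dens}(\mathcal X)\to\mathcal R$, $\mathrm{elic}_Q(\Gamma)=\mathrm{elic}_{\mathcal P^\diamond}(\Gamma^\diamond)$.
   Context: $\mathrm{Herm}(\mathcal X)$ Hermitian matrices with $\langle X,Y\rangle=\mathrm{Tr}(X^*Y)$; $\mathrm{Dens}(\mathcal X)$ density matrices. A measurement is a family $\{\mu_y\}_{y\in\mathcal Y}$ of positive semidefinite operators summing to $I$; tomographically complete if its real span is $\mathrm{Herm}(\mathcal X)$. $\phi:\mathrm{Herm}(\mathcal X)\to\mathbb R^{\mathcal Y}$, $(\phi X)_y=\langle\mu^\diamond_y,X\rangle$; $\phi^+$ its Moore–Penrose pseudoinverse; $\mathcal P^\diamond=\phi(\mathrm{Dens}(\mathcal X))$; $\Gamma^\diamond(p)=\Gamma(\phi^+p)$ for $p\in\mathcal P^\diamond$. Quantum elicitability: there is a quantum score $S=(s,\mu)$, $s:\mathcal R\times\mathbb N\to\mathbb R$, $\mu(r)$ a measurement, with $\{\Gamma(\rho)\}=\arg\max_r\sum_y\langle\mu(r)_y,\rho\rangle s(r,y)$ for all $\rho$. Classical elicitability on $\mathcal P$: there is $\hat s:\mathcal R\times\mathcal Y\to\mathbb R$ with $\{\Gamma(p)\}=\arg\max_r\sum_yp_y\hat s(r,y)$ for all $p\in\mathcal P$. Quantum identifiability of $\hat\Gamma:\mathrm{Dens}(\mathcal X)\to\mathbb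 R^k$: for each $r$ in the range there is $V(r)\in\mathrm{Herm}(\mathcal X)^k$ with $\hat\Gamma(\rho)=r\iff\langle V(r)_i,\rho\rangle=0\ \forall i$; classical identifiability on $\mathcal P$: for each $r$ there is $v(r)\in\mathbb R^{k\times\mathcal Y}$ with $\hat\Gamma(p)=r\iff v(r)p=0$. $\Gamma$ is $k$-elicitable if there exist an elicitable and identifiable $\hat\Gamma$ with values in $\mathbb R^k$ (on the same domain) and a map $\psi:\mathbb R^k\to\mathcal R$ with $\Gamma=\psi\circ\hat\Gamma$. $\mathrm{elic}_Q(\Gamma)$ (resp. $\mathrm{elic}_{\mathcal P}(\Gamma)$) is the least such $k$ in the quantum (resp. classical, domain $\mathcal P$) sense. *)

From HB Require Import structures.
From mathcomp Require Import all_boot all_order all_algebra.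
From mathcomp Require Import boolp classical_sets reals.
From mathcomp Require Import complex.

Set Implicit Arguments.
Unset Strict Implicit.
Unset Printing Implicit Defensive.

Import Order.TTheory GRing.Theory Num.Theory.
Local Open Scope ring_scope.

Section QuantumElic.
Variables (R : realType) (n : nat).

Local Notation C := (R[i]).
Local Notation mx := ('M[C]_n).

Definition cadj m p (A : 'M[C]_(m, p)) : 'M[C]_(p, m) := map_mx (@conjc R) (A^T).

Definition herm (A : mx) : Prop := cadj A = A.

Definition psd (A : mx) : Prop :=
  herm A /\ forall v : 'cV[C]_n, 0 <= (cadj v *m A *m v) 0 0.

Definition density (rho : mx) : Prop := psd rho /\ \tr rho = 1.

Definition ip (A B : mx) : C := \tr (cadj A *m B).

(* its real part (equal to <X,Y> when X, Y are Hermitian) *)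
Definition ipR (A B : mx) : R := complex.Re (ip A B).

Definition measurement (Y : finType) (mu : Y -> mx) : Prop :=
  (forall y, psd (mu y)) /\ \sum_(y : Y) mu y = 1%:M.

(* A measurement whose outcomes are labelled by natural numbers 0 .. N-1
   (finitely many outcomes; outcome y is the y-th entry of the sequence) *)
Definition nat_measurement (mu : seq mx) : Prop :=
  (forall y, (y < size mu)%N -> psd (nth 0 mu y)) /\ \sum_(A <- mu) A = 1%:M.

Definition tomo_complete (Y : finType) (mu : Y -> mx) : Prop :=
  forall H : mx, herm H ->
    exists c : Y -> R, H = \sum_(y : Y) ((c y)%:C)%C *: mu y.

Definition phi (Y : finType) (mu : Y -> mx) (X : mx) : Y -> R :=
  fun y => ipR (mu y) X.

Definition normH2 (X : mx) : R := ipR X X.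
Definition normY2 (Y : finType) (p : Y -> R) : R := \sum_(y : Y) p y ^+ 2.

(* X is the Moore--Penrose pseudoinverse of phi applied to p: among the
   Hermitian least-squares solutions of phi X = p, the one of minimal norm *)
Definition mp_solution (Y : finType) (mu : Y -> mx) (p : Y -> R) (X : mx) : Prop :=
  let lsq Z := herm Z /\ forall W : mx, herm W ->
      normY2 (fun y => phi mu Z y - p y) <= normY2 (fun y => phi mu W y - p y) in
  lsq X /\ forall Z : mx, lsq Z -> normH2 X <= normH2 Z.

Definition phi_pinv (Y : finType) (mu : Y -> mx) (p : Y -> R) : mx :=
  xget 0 [set X | mp_solution mu p X]%classic.

Definition Pdiamond (Y : finType) (mu : Y -> mx) : set (Y -> R) :=
  [set p | exists rho, density rho /\ p = phi mu rho]%classic.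

Definition Gamma_diamond (Y : finType) (mu : Y -> mx) (Rep : Type)
  (Gamma : mx -> Rep) : (Y -> R) -> Rep :=
  fun p => Gamma (phi_pinv mu p).

Definition unique_argmax (Rep : Type) (f : Rep -> R) (r0 : Rep) : Prop :=
  ([set r0] = [set r | forall r', f r' <= f r])%classic.

Definition q_elicitable (Rep : Type) (Gamma : mx -> Rep) : Prop :=
  exists (s : Rep -> nat -> R) (mu : Rep -> seq mx),
    (forall r, nat_measurement (mu r)) /\
    forall rho, density rho ->
      unique_argmax
        (fun r => \sum_(y < size (mu r)) ipR (nth 0 (mu r) y) rho * s r y)
        (Gamma rho).

Definition c_elicitable (Y : finType) (P : set (Y -> R)) (Rep : Type)
  (Gamma : (Y -> R) -> Rep) : Prop :=
  exists s : Rep -> Y -> R,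
    forall p, P p -> unique_argmax (fun r => \sum_(y : Y) p y * s r y) (Gamma p).

Definition q_identifiable k (G : mx -> 'rV[R]_k) : Prop :=
  forall r, (exists rho, density rho /\ G rho = r) ->
    exists V : 'I_k -> mx, (forall i, herm (V i)) /\
      forall rho, density rho -> (G rho = r <-> forall i, ip (V i) rho = 0).

Definition c_identifiable (Y : finType) (P : set (Y -> R)) k
  (G : (Y -> R) -> 'rV[R]_k) : Prop :=
  forall r, (exists p, P p /\ G p = r) ->
    exists v : 'I_k -> Y -> R,
      forall p, P p -> (G p = r <-> forall i, \sum_(y : Y) v i y * p y = 0).

Definition q_k_elicitable (Rep : Type) (Gamma : mx -> Rep) (k : nat) : Prop :=
  exists (G : mx -> 'rV[R]_k) (psi : 'rV[R]_k -> Rep),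
    q_elicitable G /\ q_identifiable G /\
    forall rho, density rho -> Gamma rho = psi (G rho).

Definition c_k_elicitable (Y : finType) (P : set (Y -> R)) (Rep : Type)
  (Gamma : (Y -> R) -> Rep) (k : nat) : Prop :=
  exists (G : (Y -> R) -> 'rV[R]_k) (psi : 'rV[R]_k -> Rep),
    c_elicitable P G /\ c_identifiable P G /\
    forall p, P p -> Gamma p = psi (G p).

End QuantumElic.

(* least natural number satisfying P, or None (= infinity) if there is none *)
Definition least_nat (P : nat -> Prop) : option nat :=
  if `[< exists k, P k >] then
    Some (xget 0%N [set k | P k /\ forall j, P j -> (k <= j)%N]%classic)
  else None.

Definition elicQ (R : realType) (n : nat) (Rep : Type) (Gamma : 'M[R[i]]_n -> Rep)
  : option nat := least_nat (q_k_elicitable Gamma).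

Definition elicP (R : realType) (Y : finType) (P : set (Y -> R)) (Rep : Type)
  (Gamma : (Y -> R) -> Rep) : option nat := least_nat (c_k_elicitable P Gamma).

(** Tomographic completeness makes [phi] injective on Hermitian matrices,
    so the Moore–Penrose pseudoinverse recovers every state from its outcome
    distribution and [Gamma^diamond \o phi = Gamma] on density matrices.
    Moreover every Hermitian matrix, in particular every element of a
    measurement and every identification operator, is a real combination of
    the [mu y], and [<sum_y c_y mu_y, rho> = sum_y c_y (phi rho)_y].  Hence
    quantum scores and identification functions for [Gamma] translate into
    classical ones on [P^diamond] for [Gamma^diamond], and conversely
    (measuring [mu] itself), with the same dimension [k]. *)

From HB Require Import structures.
From mathcomp Require Import all_boot all_order all_algebra.
From mathcomp Require Import boolp classical_sets reals.
From mathcomp Require Import complex.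

Set Implicit Arguments.
Unset Strict Implicit.
Unset Printing Implicit Defensive.

Import Order.TTheory GRing.Theory Num.Theory.
Local Open Scope ring_scope.

Section HilbertSchmidt.
Variables (R : realType) (n : nat).
Local Notation C := (R[i]).
Local Notation mx := ('M[C]_n).

Lemma cadjE m p (A : 'M[C]_(m, p)) i j : cadj A i j = conjc (A j i).
Proof. by rewrite !mxE. Qed.

Lemma ipE (A B : mx) : ip A B = \sum_i \sum_j conjc (A j i) * B j i.
Proof.
apply: eq_bigr => i _; rewrite mxE.
by apply: eq_bigr => j _; rewrite cadjE.
Qed.

Lemma Re_sum (I : Type) (r : seq I) (P : pred I) (F : I -> C) :
  complex.Re (\sum_(i <- r | P i) F i) = \sum_(i <- r | P i) complex.Re (F i).
Proof. exact: (raddf_sum (@complex.Re R : Rcomplex R -> R)). Qed.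

Lemma hermP (A : mx) : herm A <-> forall i j, conjc (A j i) = A i j.
Proof.
split => [hA i j | hA]; first by rewrite -cadjE hA.
by apply/matrixP => i j; rewrite cadjE hA.
Qed.

Lemma hermB (A B : mx) : herm A -> herm B -> herm (A - B).
Proof.
move=> /hermP hA /hermP hB; apply/hermP => i j.
by rewrite !mxE rmorphB /= hA hB.
Qed.

Lemma herm_lincomb (Y : finType) (c : Y -> R) (A : Y -> mx) :
  (forall y, herm (A y)) -> herm (\sum_y (c y)%:C%C *: A y).
Proof.
move=> hA; apply/hermP => i j; rewrite !summxE rmorph_sum.
apply: eq_bigr => y _; move/hermP: (hA y) => hAy.
by rewrite !mxE rmorphM /= oppr0 hAy.
Qed.

Lemma cadj_lincomb (Y : finType) (c : Y -> R) (A : Y -> mx) :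
  cadj (\sum_y (c y)%:C%C *: A y) = \sum_y (c y)%:C%C *: cadj (A y).
Proof.
apply/matrixP => i j; rewrite cadjE !summxE rmorph_sum.
by apply: eq_bigr => y _; rewrite !mxE rmorphM /= oppr0.
Qed.

Lemma ipR_lincomb_l (Y : finType) (c : Y -> R) (A : Y -> mx) (B : mx) :
  ipR (\sum_y (c y)%:C%C *: A y) B = \sum_y c y * ipR (A y) B.
Proof.
rewrite /ipR /ip cadj_lincomb mulmx_suml [\tr _]raddf_sum /= Re_sum.
apply: eq_bigr => y _; rewrite -scalemxAl mxtraceZ.
by case: (\tr _) => a b /=; rewrite mul0r subr0.
Qed.

Lemma ipRBr (A B D : mx) : ipR A (B - D) = ipR A B - ipR A D.
Proof.
rewrite /ipR -(raddfB (@complex.Re R : Rcomplex R -> R)) /ip; congr complex.Re.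
by rewrite mulmxBr linearB.
Qed.

(* [<A, B>] equals its own conjugate. *)
Lemma ip_herm_real (A B : mx) : herm A -> herm B -> ip A B = (ipR A B)%:C%C.
Proof.
move=> /hermP hA /hermP hB.
have ipJ : conjc (ip A B) = ip A B.
  rewrite !ipE rmorph_sum exchange_big; apply: eq_bigr => i _.
  rewrite rmorph_sum; apply: eq_bigr => j _.
  by rewrite rmorphM /= conjcK hB -hA.
by rewrite RRe_real // CrealE; apply/eqP.
Qed.

Lemma ipR_self_eq0 (X : mx) : ipR X X = 0 -> X = 0.
Proof.
have term_ge0 i j : 0 <= conjc (X j i) * X j i by rewrite mulrC mulcJ_ge0.
have row_ge0 i : 0 <= \sum_j conjc (X j i) * X j i by apply: sumr_ge0.
have ip_ge0 : 0 <= ip X X by rewrite ipE; apply: sumr_ge0.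
move=> ReX0; have ip0 : ip X X = 0.
  by move: ReX0 (ger0_Im ip_ge0); rewrite /ipR; case: (ip X X) => a b /= -> ->.
apply/matrixP => j i; rewrite mxE.
move: ip0; rewrite ipE => /(psumr_eq0P (fun i _ => row_ge0 i)) /(_ i isT).
move=> /(psumr_eq0P (fun j _ => term_ge0 i j)) /(_ j isT) /eqP.
by rewrite mulf_eq0 conjc_eq0 orbb => /eqP.
Qed.

Lemma density_herm (rho : mx) : density rho -> herm rho.
Proof. by case=> -[]. Qed.

End HilbertSchmidt.

Section Tomography.
Variables (R : realType) (n : nat) (Y : finType) (mu : Y -> 'M[R[i]]_n).
Hypotheses (mu_meas : measurement mu) (mu_complete : tomo_complete mu).
Local Notation mx := ('M[R[i]]_n).

Lemma mu_herm y : herm (mu y).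
Proof. exact: (mu_meas.1 y).1. Qed.

Lemma phi_herm_inj (Z W : mx) :
  herm Z -> herm W -> phi mu Z =1 phi mu W -> Z = W.
Proof.
move=> hZ hW eqZW; apply/eqP; rewrite -subr_eq0; apply/eqP/ipR_self_eq0.
have [c defZW] := mu_complete (hermB hZ hW).
rewrite {1}defZW ipR_lincomb_l; apply: big1 => y _.
by rewrite ipRBr -[ipR _ Z]/(phi mu Z y) eqZW subrr mulr0.
Qed.

Lemma normY2_ge0 (p : Y -> R) : 0 <= normY2 p.
Proof. by apply: sumr_ge0 => y _; exact: sqr_ge0. Qed.

Lemma normY2_subrr (p : Y -> R) : normY2 (fun y => p y - p y) = 0.
Proof. by apply: big1 => y _; rewrite subrr expr0n. Qed.

Lemma normY2_eq0 (p : Y -> R) : normY2 p = 0 -> p =1 (fun=> 0).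
Proof.
move=> /(psumr_eq0P (fun y _ => sqr_ge0 (p y))) p0 y.
by apply/eqP; rewrite -sqrf_eq0 p0.
Qed.

(* The least-squares residual of [phi rho] vanishes at [rho], so every
   least-squares solution is mapped onto [phi rho]. *)
Lemma lsq_phi_eq (rho Z : mx) : herm rho -> herm Z ->
  (forall W, herm W -> normY2 (fun y => phi mu Z y - phi mu rho y)
                       <= normY2 (fun y => phi mu W y - phi mu rho y)) ->
  Z = rho.
Proof.
move=> hrho hZ Zmin; apply: phi_herm_inj => // y; apply/eqP; rewrite -subr_eq0.
apply/eqP; move: y; apply: normY2_eq0; apply/eqP.
by rewrite eq_le normY2_ge0 andbT -(normY2_subrr (phi mu rho)) Zmin.
Qed.

Lemma phi_pinvK (rho : mx) : herm rho -> phi_pinv mu (phi mu rho) = rho.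
Proof.
move=> hrho; apply: xget_unique => [|Z [[hZ Zmin] _]]; last exact: lsq_phi_eq.
split=> [|Z [hZ Zmin]]; last by rewrite (lsq_phi_eq hrho hZ Zmin).
by split=> // W _; rewrite normY2_subrr normY2_ge0.
Qed.

Definition hcoord (A : mx) : Y -> R :=
  xget (fun=> 0) [set c | A = \sum_y (c y)%:C%C *: mu y]%classic.

Lemma hcoordK (A : mx) : herm A -> A = \sum_y (hcoord A y)%:C%C *: mu y.
Proof. by move=> hA; apply: (xgetPex _ (mu_complete hA)). Qed.

Lemma ipR_hcoord (A rho : mx) :
  herm A -> ipR A rho = \sum_y hcoord A y * phi mu rho y.
Proof. by move=> hA; rewrite {1}(hcoordK hA) ipR_lincomb_l. Qed.

Lemma ip_lincomb_eq0 (c : Y -> R) (rho : mx) : herm rho ->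
  ip (\sum_y (c y)%:C%C *: mu y) rho = 0 <-> \sum_y c y * phi mu rho y = 0.
Proof.
move=> hrho; rewrite ip_herm_real ?ipR_lincomb_l //; last exact: herm_lincomb mu_herm.
by split=> [[]|->].
Qed.

Lemma ip_eq0_hcoord (A rho : mx) : herm A -> herm rho ->
  ip A rho = 0 <-> \sum_y hcoord A y * phi mu rho y = 0.
Proof. by move=> hA; rewrite {1}(hcoordK hA); apply: ip_lincomb_eq0. Qed.

Lemma Gamma_diamond_phi (Rep : Type) (G : mx -> Rep) (rho : mx) :
  density rho -> Gamma_diamond mu G (phi mu rho) = G rho.
Proof. by move=> /density_herm hrho; rewrite /Gamma_diamond phi_pinvK. Qed.

Lemma measurement_enum : nat_measurement (map mu (enum Y)).
Proof.
split=> [j /(mem_nth 0) /mapP[y _ ->]|]; first exact: mu_meas.1.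
by rewrite big_map big_enum; exact: mu_meas.2.
Qed.

Lemma enum_score (Rep : Type) (sh : Rep -> Y -> R) :
  exists s : Rep -> nat -> R, forall r (a : mx -> R),
    \sum_(j < size (map mu (enum Y))) a (nth 0 (map mu (enum Y)) j) * s r j
    = \sum_y a (mu y) * sh r y.
Proof.
case: (pickP (@predT Y)) => [y0 _ | Y0].
  exists (fun r j => sh r (nth y0 (enum Y) j)) => r a.
  rewrite -[RHS]big_enum /= (big_nth y0) big_mkord size_map.
  by apply: eq_bigr => j _; rewrite (nth_map y0).
exists (fun _ _ => 0) => r a; rewrite big1 => [|j _]; last exact: mulr0.
by rewrite big1 // => y; have := Y0 y.
Qed.

Lemma q_elicitable_diamond (Rep : Type) (G : mx -> Rep) :
  q_elicitable G -> c_elicitable (Pdiamond mu) (Gamma_diamond mu G).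
Proof.
move=> [s [muq [muq_meas s_elic]]].
exists (fun r y => \sum_(j < size (muq r)) s r j * hcoord (nth 0 (muq r) j) y).
move=> _ [rho [rho_dens ->]]; rewrite Gamma_diamond_phi //.
suff -> : (fun r => \sum_y phi mu rho y *
            \sum_(j < size (muq r)) s r j * hcoord (nth 0 (muq r) j) y)
        = (fun r => \sum_(j < size (muq r)) ipR (nth 0 (muq r) j) rho * s r j).
  exact: s_elic.
apply: funext => r; under eq_bigr do rewrite mulr_sumr.
rewrite exchange_big; apply: eq_bigr => j _.
rewrite ipR_hcoord ?mulr_suml; last exact: ((muq_meas r).1 j (ltn_ord j)).1.
by apply: eq_bigr => y _; rewrite mulrCA mulrC [hcoord _ _ * _]mulrC.
Qed.

Lemma c_elicitable_comp_phi (Rep : Type) (G : (Y -> R) -> Rep) :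
  c_elicitable (Pdiamond mu) G -> q_elicitable (G \o phi mu).
Proof.
move=> [sh sh_elic]; have [s sE] := enum_score sh.
exists s, (fun=> map mu (enum Y)); split=> [r|rho rho_dens].
  exact: measurement_enum.
suff -> : (fun r => \sum_(j < size (map mu (enum Y)))
             ipR (nth 0 (map mu (enum Y)) j) rho * s r j)
        = (fun r => \sum_y phi mu rho y * sh r y).
  by apply: sh_elic; exists rho.
by apply: funext => r; exact: (sE r (fun A => ipR A rho)).
Qed.

Lemma q_identifiable_diamond k (G : mx -> 'rV[R]_k) :
  q_identifiable G -> c_identifiable (Pdiamond mu) (Gamma_diamond mu G).
Proof.
move=> G_id r [_ [[rho [rho_dens ->]]]]; rewrite Gamma_diamond_phi // => Grho.
have [|V [V_herm V_id]] := G_id r; first by exists rho.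
exists (fun i => hcoord (V i)) => _ [rho' [rho'_dens ->]].
rewrite Gamma_diamond_phi // V_id //; have hrho' := density_herm rho'_dens.
by split=> V0 i; apply/(ip_eq0_hcoord (V_herm i) hrho'); apply: V0.
Qed.

Lemma c_identifiable_comp_phi k (G : (Y -> R) -> 'rV[R]_k) :
  c_identifiable (Pdiamond mu) G -> q_identifiable (G \o phi mu).
Proof.
move=> G_id r [rho [rho_dens Grho]].
have [|v v_id] := G_id r; first by exists (phi mu rho); split=> //; exists rho.
exists (fun i => \sum_y (v i y)%:C%C *: mu y).
split=> [i|rho' rho'_dens]; first exact: herm_lincomb mu_herm.
rewrite /= v_id; last by exists rho'.
have hrho' := density_herm rho'_dens.
by split=> v0 i; apply/(ip_lincomb_eq0 _ hrho'); apply: v0.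
Qed.

Lemma q_k_elicitable_diamondE (Rep : Type) (Gamma : mx -> Rep) k :
  q_k_elicitable Gamma k <->
  c_k_elicitable (Pdiamond mu) (Gamma_diamond mu Gamma) k.
Proof.
split=> -[G [psi [G_elic [G_id GammaE]]]].
  exists (Gamma_diamond mu G), psi; split; first exact: q_elicitable_diamond.
  split; first exact: q_identifiable_diamond.
  by move=> _ [rho [rho_dens ->]]; rewrite !Gamma_diamond_phi // GammaE.
exists (G \o phi mu), psi; split; first exact: c_elicitable_comp_phi.
split; first exact: c_identifiable_comp_phi.
move=> rho rho_dens; rewrite -(Gamma_diamond_phi Gamma rho_dens) GammaE //.
by exists rho.
Qed.

End Tomography.

Theorem corollary6p3 (R : realType) (n : nat) (Y : finType)
  (mu : Y -> 'M[R[i]]_n) (Rep : Type) (Gamma : 'M[R[i]]_n -> Rep) :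
  measurement mu -> tomo_complete mu ->
  elicQ Gamma = elicP (Pdiamond mu) (Gamma_diamond mu Gamma).
Proof.
move=> mu_meas mu_complete; congr least_nat; apply: funext => k.
exact/propext/q_k_elicitable_diamondE.
Qed.
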